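(* Let $K\in\{\mathbb R,\mathbb C,\mathbb H\}$ and let $(E,d)$ be a metric vector space over $K$. Then $d$ is asymptotically isometric to (the distance $\|x-y\|$ of) a norm $\|\cdot\|$ on $E$ if and only if the following three conditions hold: (1) $d$ is asymptotically multiplicative; (2) $d$ is unbounded on every non-trivial linear subspace of $E$; (3) for every $C_1>1$ there exists $C_0\ge0$ such that for every $n\ge2$ and all $x_1,\dots,x_n,y_1,\dots,y_n\in E$, $$d\Big(\sum_{i=1}^n x_i,\sum_{i=1}^n y_i\Big)\le C_1\sum_{i=1}^n d(x_i,y_i)+nC_0.$$ In that case a norm with this property is given by $\|x\|=\lim_{n\to+\infty}\frac1n\int_{\mathbb U}d(nux,0)\,d\mu(u)$.
   Context: $K$ is $\mathbb R$, $\mathbb C$ or $\mathbb H$ with the usual absolute value. A metric vector space $(E,d)$ is a topological vector space over $K$ whose topology is generated by the metric $d$. $\mathbb U=\{u\in K:|u|=1\}$ and $\mu$ is the right-invariant Haar probability measure on $\mathbb U$. A distance $d$ is asymptotically isometric to a distance $\delta$ if for every $C_1>1$ there is $C_2\ge0$ with $C_1^{-1}\delta(x,y)-C_2\le d(x,y)\le C_1\delta(x,y)+C_2$ for all $x,y$. The distance $d$ is asymptotically multiplicative if for every $C_1>1$ there exist $C_2\ge0$, $C_3\ge0$ such that for all $\lambda\in K$ and $x,y\in E$: $C_1^{-1}|\lambda|d(x,y)-C_2|\lambda|-C_3\le d(\lambda x,\lambda y)\le C_1|\lambda|d(x,y)+C_2|\lambda|+C_3$. $d$ is unbounded on a subspace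 $V$ if $\sup_{x,y\in V}d(x,y)=\infty$. *)

From HB Require Import structures.
From mathcomp Require Import all_boot all_order all_algebra.
From mathcomp Require Import all_classical all_reals all_analysis.
From mathcomp Require Import complex ring.

Set Implicit Arguments.
Unset Strict Implicit.
Unset Printing Implicit Defensive.
Import Order.TTheory GRing.Theory Num.Theory.
Local Open Scope classical_set_scope.
Local Open Scope ring_scope.
Local Open Scope complex_scope.

Definition cabs (R : realType) (z : R[i]) : R :=
  let: a +i* b := z in Num.sqrt (a ^+ 2 + b ^+ 2).

(* Hamilton's quaternions a + b i + c j + d k *)
Record quat (R : Type) := Quat { q0 : R; q1 : R; q2 : R; q3 : R }.

Section Quaternions.
Variable R : realType.

Definition quat_to (q : quat R) : R * R * R * R := (q0 q, q1 q, q2 q, q3 q).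
Definition quat_of (p : R * R * R * R) : quat R :=
  let: (a, b, c, d) := p in Quat a b c d.
Lemma quat_toK : cancel quat_to quat_of. Proof. by case. Qed.

HB.instance Definition _ := Equality.copy (quat R) (can_type quat_toK).
HB.instance Definition _ := Choice.copy (quat R) (can_type quat_toK).

Definition qzero : quat R := Quat 0 0 0 0.
Definition qopp (x : quat R) : quat R := Quat (- q0 x) (- q1 x) (- q2 x) (- q3 x).
Definition qadd (x y : quat R) : quat R :=
  Quat (q0 x + q0 y) (q1 x + q1 y) (q2 x + q2 y) (q3 x + q3 y).

Lemma qaddA : associative qadd.
Proof. by case=> ? ? ? ? [] ? ? ? ? [] ? ? ? ?; rewrite /qadd /= !addrA. Qed.
Lemma qaddC : commutative qadd.
Proof.
by case=> ? ? ? ? [] ? ? ? ?; rewrite /qadd /=; congr Quat; rewrite addrC.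
Qed.
Lemma qadd0 : left_id qzero qadd.
Proof. by case=> ? ? ? ?; rewrite /qadd /= !add0r. Qed.
Lemma qaddN : left_inverse qzero qopp qadd.
Proof. by case=> ? ? ? ?; rewrite /qadd /= !addNr. Qed.

HB.instance Definition _ := GRing.isZmodule.Build (quat R) qaddA qaddC qadd0 qaddN.

Definition qone : quat R := Quat 1 0 0 0.
Definition qmul (x y : quat R) : quat R :=
  let: Quat a1 b1 c1 d1 := x in let: Quat a2 b2 c2 d2 := y in
  Quat (a1 * a2 - b1 * b2 - c1 * c2 - d1 * d2)
       (a1 * b2 + b1 * a2 + c1 * d2 - d1 * c2)
       (a1 * c2 - b1 * d2 + c1 * a2 + d1 * b2)
       (a1 * d2 + b1 * c2 - c1 * b2 + d1 * a2).

Lemma qmulA : associative qmul.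
Proof. by case=> ? ? ? ? [] ? ? ? ? [] ? ? ? ?; rewrite /qmul; congr Quat; ring. Qed.
Lemma qmul1 : left_id qone qmul.
Proof. by case=> ? ? ? ?; rewrite /qmul; congr Quat; ring. Qed.
Lemma qmulr1 : right_id qone qmul.
Proof. by case=> ? ? ? ?; rewrite /qmul; congr Quat; ring. Qed.
Lemma qmulDl' : left_distributive qmul qadd.
Proof.
by case=> ? ? ? ? [] ? ? ? ? [] ? ? ? ?; rewrite /qmul /qadd /=; congr Quat; ring.
Qed.
Lemma qmulDr' : right_distributive qmul qadd.
Proof.
by case=> ? ? ? ? [] ? ? ? ? [] ? ? ? ?; rewrite /qmul /qadd /=; congr Quat; ring.
Qed.
Lemma qmulDl : left_distributive qmul +%R. Proof. exact: qmulDl'. Qed.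
Lemma qmulDr : right_distributive qmul +%R. Proof. exact: qmulDr'. Qed.
Lemma qone_neq0 : qone != 0.
Proof. by apply/eqP => -[]; apply/eqP; rewrite oner_eq0. Qed.

HB.instance Definition _ :=
  GRing.Zmodule_isNzRing.Build (quat R) qmulA qmul1 qmulr1 qmulDl qmulDr qone_neq0.

Definition qabs (x : quat R) : R :=
  Num.sqrt (q0 x ^+ 2 + q1 x ^+ 2 + q2 x ^+ 2 + q3 x ^+ 2).

End Quaternions.

Section Generic.
Variables (R : realType) (K : nzRingType) (absK : K -> R).

(* K seen as a measurable space with its Borel sigma-algebra (generated by
   the open balls of the metric (a, b) |-> absK (a - b)). *)
Definition Kpt : Type := K.
HB.instance Definition _ := Choice.on Kpt.
HB.instance Definition _ := isPointed.Build Kpt (0 : K).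
Definition Kballs : set (set Kpt) :=
  [set B | exists (c : K) (r : R), B = [set z : K | absK (z - c) < r]].
Definition Kmeas : Type := g_sigma_algebraType Kballs.

Definition Uset : set Kmeas := [set u : K | absK u = 1].

(* mu is the right-invariant Haar probability measure on U (viewed as a
   probability measure on K concentrated on U) *)
Definition is_Haar_U (mu : probability Kmeas R) : Prop :=
  mu Uset = 1%E /\
  forall (A : set Kmeas), measurable A -> forall u : K, absK u = 1 ->
    mu [set (a : K) * u | a in A] = mu A.

Section OnE.
Variables (E : lmodType K) (d : E -> E -> R).

Definition is_distance : Prop :=
  (forall x y, d x y = 0 <-> x = y) /\
  (forall x y, d x y = d y x) /\
  (forall x y z, d x z <= d x y + d y z).

Definition metric_vector_space : Prop :=
  is_distance /\
  (forall (x y : E) (e : R), 0 < e -> exists2 r : R, 0 < r &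
     forall x' y', d x' x < r -> d y' y < r -> d (x' + y') (x + y) < e) /\
  (forall (a : K) (x : E) (e : R), 0 < e -> exists2 r : R, 0 < r &
     forall (a' : K) (x' : E), absK (a' - a) < r -> d x' x < r ->
       d (a' *: x') (a *: x) < e).

Definition is_norm (N : E -> R) : Prop :=
  (forall x, N x = 0 -> x = 0) /\
  (forall (a : K) x, N (a *: x) = absK a * N x) /\
  (forall x y, N (x + y) <= N x + N y).

Definition asymp_isometric_to_norm (N : E -> R) : Prop :=
  forall C1 : R, 1 < C1 -> exists C2 : R, 0 <= C2 /\
    forall x y, C1^-1 * N (x - y) - C2 <= d x y /\
                d x y <= C1 * N (x - y) + C2.

Definition asymp_multiplicative : Prop :=
  forall C1 : R, 1 < C1 -> exists C2 C3 : R, 0 <= C2 /\ 0 <= C3 /\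
    forall (l : K) (x y : E),
      C1^-1 * absK l * d x y - C2 * absK l - C3 <= d (l *: x) (l *: y) /\
      d (l *: x) (l *: y) <= C1 * absK l * d x y + C2 * absK l + C3.

Definition is_subspace (V : set E) : Prop :=
  V 0 /\ forall (a : K) u v, V u -> V v -> V (a *: u + v).

Definition unbounded_on_subspaces : Prop :=
  forall V : set E, is_subspace V -> (exists v, V v /\ v <> 0) ->
    forall M : R, exists x y, V x /\ V y /\ M < d x y.

Definition sum_condition : Prop :=
  forall C1 : R, 1 < C1 -> exists C0 : R, 0 <= C0 /\
    forall n : nat, (2 <= n)%N -> forall x y : 'I_n -> E,
      d (\sum_(i < n) x i) (\sum_(i < n) y i)
        <= C1 * (\sum_(i < n) d (x i) (y i)) + n%:R * C0.

Definition haar_limit (mu : probability Kmeas R) (N : E -> R) : Prop :=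
  forall x : E,
    (fun n : nat => (((n%:R)^-1)%:E *
        \int[mu]_(u in Uset) (d ((n%:R * (u : K)) *: x) 0)%:E)%E)
      @ \oo --> (N x)%:E.

End OnE.

Definition theorem3_for : Prop :=
  forall (E : lmodType K) (d : E -> E -> R), metric_vector_space d ->
    ((exists N : E -> R, is_norm N /\ asymp_isometric_to_norm d N) <->
       [/\ asymp_multiplicative d, unbounded_on_subspaces d & sum_condition d])
    /\
    (asymp_multiplicative d -> unbounded_on_subspaces d -> sum_condition d ->
       forall mu : probability Kmeas R, is_Haar_U mu ->
         exists N : E -> R, [/\ is_norm N, asymp_isometric_to_norm d N &
                                haar_limit d mu N]).

End Generic.

(* The norm is recovered as ||x|| = limsup_n d(n x, 0) / n.  Asymptotic
   multiplicativity makes it absolutely homogeneous and comparable with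
   d(x, 0): for each c > 1, c^-1 d(x, 0) - C <= ||x|| <= c d(x, 0) + C.
   Condition (3) with n = 2 makes it subadditive and makes d(x, y) comparable
   with d(x - y, 0), hence with ||x - y||; condition (2) rules out ||x|| = 0
   for x <> 0, as d would then be bounded on the line K x.  Conversely, the
   three conditions follow from the homogeneity and subadditivity of a norm
   asymptotically isometric to d, and since |u| = 1 on U the integrand
   d(n u x, 0) lies between c^-1 n ||x|| - C and c n ||x|| + C, which gives the
   limit formula. *)

From HB Require Import structures.
From mathcomp Require Import all_boot all_order all_algebra.
From mathcomp Require Import all_classical all_reals all_analysis.
From mathcomp Require Import complex ring lra.
Set Implicit Arguments.
Unset Strict Implicit.
Unset Printing Implicit Defensive.
Import Order.TTheory GRing.Theory Num.Theory.
Local Open Scope ring_scope.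
Local Open Scope classical_set_scope.

Section RealFacts.
Variable R : realType.
Implicit Types x y k : R.

Lemma ler_forall_addgt0_mulr x y k : 0 <= k ->
  (forall e, 0 < e -> x <= y + k * e) -> x <= y.
Proof.
move=> k0 xy; apply/ler_addgt0Pr => e e0.
have k1 : 0 < k + 1 by lra.
apply: le_trans (xy (e / (k + 1)) (divr_gt0 e0 k1)) _.
rewrite lerD2l mulrA ler_pdivrMr //; nra.
Qed.

Lemma ler_forall_gt1_mulr x y : 0 <= y -> (forall c, 1 < c -> x <= c * y) -> x <= y.
Proof.
move=> y0 xy; apply: (ler_forall_addgt0_mulr y0) => e e0.
by rewrite -[y in y + _]mulr1 -mulrDr mulrC; apply: xy; rewrite ltrDl.
Qed.

Lemma ler_divl_addr k x y r : 0 < k -> x <= k * y + r -> k^-1 * x - k^-1 * r <= y.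
Proof. by move=> k0 xy; rewrite -mulrBr ler_pdivrMl // lerBlDr. Qed.

Lemma exists_sqrt_gt1 c : 1 < c -> exists2 b : R, 1 < b & b * b = c.
Proof.
move=> c1; exists (Num.sqrt c); last by rewrite -expr2 sqr_sqrtr //; lra.
by rewrite -sqrtr1 ltr_sqrt //; lra.
Qed.

Lemma cvg_div_succ k : (fun n : nat => k / n.+1%:R) @ \oo --> 0.
Proof. by rewrite -(mulr0 k); apply: cvgMl_tmp; exact: cvg_harmonic. Qed.

Lemma cvg_asymp_squeeze (a : nat -> R) (L : R) : 0 <= L ->
  (forall c, 1 < c -> exists2 C : R, 0 <= C & forall n,
     c^-1 * L - C / n.+1%:R <= a n /\ a n <= c * L + C / n.+1%:R) ->
  a @ \oo --> (L : R^o).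
Proof.
move=> L0 aL; apply/cvgrPdist_le => eps eps0.
have L1 : 0 < 2 * (L + 1) by lra.
pose c := 1 + eps / (2 * (L + 1)).
have c1 : 1 < c by rewrite ltrDl divr_gt0.
have [C C0 hC] := aL c c1.
have cL : (c - 1) * L <= eps / 2.
  by rewrite /c addrAC subrr add0r mulrAC ler_pdivrMr //; nra.
have ci : 2 - c <= c^-1 by rewrite -div1r ler_pdivlMr; nra.
clearbody c.
have /cvgr0Pnorm_le/(_ (eps / 2)) := cvg_div_succ C.
move=> /(_ (divr_gt0 eps0 (ltr0n _ 2))) small.
near=> n; have : C / n.+1%:R <= eps / 2.
  by near: n; apply: filterS small => n /ler_normlW.
have := hC n; move: (a n) (C / n.+1%:R) => an D [lo hi] Deps.
have : (2 - c) * L <= c^-1 * L by rewrite ler_wpM2r.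
move=> ciL; rewrite ler_norml; apply/andP; split; lra.
Unshelve. all: by end_near. Qed.

End RealFacts.

Section AsymptoticComparison.
Variables (R : realType) (T : Type).
Implicit Types f g h : T -> R.

Definition asymp_le f g := forall c : R, 1 < c ->
  exists2 C : R, 0 <= C & forall t, f t <= c * g t + C.

Definition asymp_equiv f g := asymp_le f g /\ asymp_le g f.

Lemma asymp_le_trans g f h : asymp_le f g -> asymp_le g h -> asymp_le f h.
Proof.
move=> fg gh c /exists_sqrt_gt1[b b1 <-].
have [C C0 hfg] := fg b b1; have [C' C'0 hgh] := gh b b1.
exists (b * C' + C) => [|t]; first by rewrite addr_ge0 // mulr_ge0 //; lra.
have bg : b * g t <= b * (b * h t + C') by rewrite ler_wpM2l ?hgh //; lra.
have := hfg t; lra.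
Qed.

Lemma asymp_equiv_trans g f h :
  asymp_equiv f g -> asymp_equiv g h -> asymp_equiv f h.
Proof.
by move=> [fg gf] [gh hg]; split; [apply: asymp_le_trans gh|apply: asymp_le_trans gf].
Qed.

Lemma asymp_equivP f g : asymp_equiv f g <->
  forall c : R, 1 < c -> exists C : R, 0 <= C /\
    forall t, c^-1 * g t - C <= f t /\ f t <= c * g t + C.
Proof.
split=> [[fg gf] c c1 | H].
  have [C C0 hfg] := fg c c1; have [C' C'0 hgf] := gf c c1.
  exists (C + C'); split=> [|t]; first exact: addr_ge0.
  have c0 : 0 < c by lra.
  have : c^-1 * C' <= C' by rewrite ler_piMl // invf_le1; lra.
  have := ler_divl_addr c0 (hgf t); have := hfg t; lra.
split=> c c1; have [C [C0 hC]] := H c c1; first by exists C => // t; case: (hC t).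
have c0 : 0 < c by lra.
exists (c * C) => [|t]; first by rewrite mulr_ge0 //; lra.
have [+ _] := hC t; rewrite lerBlDr -(ler_pM2l c0) mulrDr mulrA mulfV ?gt_eqF //.
by rewrite mul1r addrC.
Qed.
End AsymptoticComparison.

Lemma asymp_equiv_comp (R : realType) (S T : Type) (k : S -> T) (f g : T -> R) :
  asymp_equiv f g -> asymp_equiv (f \o k) (g \o k).
Proof.
move=> [fg gf]; split=> c c1;
  [have [C C0 H] := fg c c1 | have [C C0 H] := gf c c1]; by exists C => // s; exact: H.
Qed.

Section LimsupBounded.
Variable R : realType.
Implicit Types (u v e : nat -> R) (a b eps : R).

Lemma limn_sup_le_near u b : bounded_fun u ->
  (\forall n \near \oo, u n <= b) -> limn_sup u <= b.
Proof.
move=> bu [m _ ub]; rewrite limn_supE //.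
apply: (@le_trans _ _ (sups u m)).
  by apply: ge_inf; [exact: bounded_fun_has_lbound_sups | exists m].
by apply: ge_sup => [|_ [n /= mn <-]]; [exists (u m), m => /= | exact: ub].
Qed.

Lemma limn_sup_ge_frequently u b : bounded_fun u ->
  (forall m, exists2 n, (m <= n)%N & b <= u n) -> b <= limn_sup u.
Proof.
move=> bu bu_; rewrite limn_supE //; apply: lb_le_inf => [|_ [m _ <-]].
  by exists (sups u 0), 0%N.
have [n mn /le_trans] := bu_ m; apply; apply: ub_le_sup; last by exists n.
exact/has_ubound_sdrop/bounded_fun_has_ubound.
Qed.

Lemma near_le_limn_sup_add u eps : bounded_fun u -> 0 < eps ->
  \forall n \near \oo, u n <= limn_sup u + eps.
Proof.
move=> bu e0; rewrite limn_supE //.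
have [_ [m _ <-] /ltW sup_le] : exists2 s, range (sups u) s & s < inf (range (sups u)) + eps.
  apply: inf_adherent => //; split; first by exists (sups u 0), 0%N.
  exact: bounded_fun_has_lbound_sups.
exists m => // n /= mn; apply: le_trans sup_le; apply: ub_le_sup; last by exists n.
exact/has_ubound_sdrop/bounded_fun_has_ubound.
Qed.

Lemma frequently_ge_limn_sup_sub u eps : bounded_fun u -> 0 < eps ->
  forall m, exists2 n, (m <= n)%N & limn_sup u - eps <= u n.
Proof.
move=> bu e0 m.
have [|_ [n /= mn <-] /ltW le_sup] := @sup_adherent _ (sdrop u m) _ e0.
  split; first by exists (u m), m => /=.
  exact/has_ubound_sdrop/bounded_fun_has_ubound.
exists n => //; apply: le_trans le_sup; rewrite lerD2r limn_supE //.
by apply: ge_inf; [exact: bounded_fun_has_lbound_sups | exists m].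
Qed.

Lemma limn_sup_le_scale u v e a : bounded_fun u -> bounded_fun v -> 0 <= a ->
  e @ \oo --> 0 -> (forall n, v n <= a * u n + e n) ->
  limn_sup v <= a * limn_sup u.
Proof.
move=> bu bv a0 /cvgr0Pnorm_le e0 vu.
have a1 : 0 <= a + 1 by lra.
apply: (ler_forall_addgt0_mulr a1) => eps eps0; apply: limn_sup_le_near => //.
near=> n.
have un : u n <= limn_sup u + eps by near: n; exact: near_le_limn_sup_add.
have en : `|e n| <= eps by near: n; exact: e0.
have := ler_wpM2l a0 un; have := ler_norm (e n); have := vu n; lra.
Unshelve. all: by end_near. Qed.

Lemma limn_sup_ge_scale u v e a : bounded_fun u -> bounded_fun v -> 0 <= a ->
  e @ \oo --> 0 -> (forall n, a * u n - e n <= v n) ->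
  a * limn_sup u <= limn_sup v.
Proof.
move=> bu bv a0 /cvgr0Pnorm_le e0 uv.
have a1 : 0 <= a + 1 by lra.
apply: (ler_forall_addgt0_mulr a1) => eps eps0; rewrite -lerBlDr.
apply: limn_sup_ge_frequently => // m.
have [m' _ e_small] := e0 eps eps0.
have [n mn un] := frequently_ge_limn_sup_sub bu eps0 (maxn m m').
move: mn; rewrite geq_max => /andP[mn m'n]; exists n => //.
have := ler_wpM2l a0 un; have := ler_normlW (e_small n m'n); have := uv n; lra.
Qed.

Lemma bounded_fun_nonneg u b : (forall n, 0 <= u n <= b) -> bounded_fun u.
Proof.
move=> ub; rewrite /bounded_near; near=> M => n _ /=.
have /andP[u0 ubn] := ub n; rewrite ger0_norm //; apply: le_trans ubn _.
by near: M; apply: nbhs_pinfty_ge; rewrite num_real.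
Unshelve. all: by end_near. Qed.

End LimsupBounded.

(* Integrands such as [u |-> d ((n * u) *: x) 0] are not known to be
   measurable; monotonicity still holds because the integral of a nonnegative
   function is the supremum of the integrals of the simple functions below it. *)
Lemma ge0_le_integral_nonmeasurable d (T : measurableType d) (R : realType)
    (mu : {measure set T -> \bar R}) (D : set T) (f g : T -> \bar R) :
  (forall x, D x -> 0 <= f x)%E -> (forall x, D x -> f x <= g x)%E ->
  (\int[mu]_(x in D) f x <= \int[mu]_(x in D) g x)%E.
Proof.
move=> f0 fg; have g0 x : D x -> (0 <= g x)%E by move=> Dx; exact: le_trans (f0 _ Dx) (fg _ Dx).
rewrite !(integral_mkcond D) !ge0_integralTE; try exact: erestrict_ge0.
apply: ereal_sup_le => _ [h hf <-]; exists h => // x.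
exact: le_trans (hf x) (lee_restrict fg x).
Qed.

Lemma ge0_integral_between d (T : measurableType d) (R : realType)
    (mu : {measure set T -> \bar R}) (D : set T) (f : T -> R) (a b : R) :
  measurable D -> mu D = 1%E -> (forall x, D x -> 0 <= f x) ->
  (forall x, D x -> a <= f x <= b) ->
  (a%:E <= \int[mu]_(x in D) (f x)%:E <= b%:E)%E.
Proof.
move=> mD muD f0 fab; apply/andP; split.
  have [a0|a0] := leP a 0.
    apply: (@le_trans _ _ 0%E); first by rewrite lee_fin.
    by apply: integral_ge0 => x Dx; rewrite lee_fin f0.
  rewrite -[a%:E]mule1 -muD -integral_cst //.
  apply: ge0_le_integral_nonmeasurable => x Dx /=; rewrite lee_fin ?(ltW a0) //.
  by case/andP: (fab x Dx).
rewrite -[b%:E]mule1 -muD -integral_cst //.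
apply: ge0_le_integral_nonmeasurable => x Dx /=; rewrite lee_fin ?f0 //.
by case/andP: (fab x Dx).
Qed.

Section UnitSphere.
Variables (R : realType) (K : nzRingType) (absK : K -> R).
Local Notation U := (@Uset R K absK).

Lemma measurable_ball0 (r : R) : measurable [set z : Kmeas absK | absK z < r].
Proof. by apply: sub_sigma_algebra; exists 0, r; apply/seteqP; split => z /=; rewrite subr0. Qed.

Lemma measurable_Uset : measurable U.
Proof.
have -> : U = ~` [set z : Kmeas absK | absK z < 1] `&`
    \bigcap_k [set z : Kmeas absK | absK z < 1 + k.+1%:R^-1].
  apply/seteqP; split => z; rewrite /Uset /=.
    move=> z1; split => [|k _ /=]; rewrite z1 ?ltxx //.
    by rewrite ltrDl invr_gt0 ltr0Sn.
  move=> [/negP + z_small]; rewrite -leNgt => z_ge1.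
  apply/eqP; rewrite eq_le z_ge1 andbT.
  rewrite leNgt; apply/negP => /ltr_add_invr[k].
  by rewrite ltNge (ltW (z_small k I)).
by apply: measurableI; [apply: measurableC | apply: bigcapT_measurable => k];
  exact: measurable_ball0.
Qed.

End UnitSphere.

Section AbsoluteValue.
Variables (R : realType) (K : nzRingType) (absK : K -> R).
Hypothesis absK_ge0 : forall a, 0 <= absK a.
Hypothesis absKM : forall a b, absK (a * b) = absK a * absK b.
Hypothesis absK_nat : forall n : nat, absK n%:R = n%:R.
Local Notation U := (@Uset R K absK).

Lemma absK0 : absK 0 = 0. Proof. exact: absK_nat 0. Qed.

Lemma absKN1 : absK (-1) = 1.
Proof.
apply/eqP; rewrite -(@eqrXn2 _ 2) // expr1n expr2 -absKM mulrNN mulr1.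
by rewrite (absK_nat 1).
Qed.

Lemma absK_natM (n : nat) u : absK (n%:R * u) = n%:R * absK u.
Proof. by rewrite absKM absK_nat. Qed.

Section MetricVectorSpace.
Variables (E : lmodType K) (d : E -> E -> R).

Hypothesis hd : is_distance d.

Definition dist_pair (p : E * E) := d p.1 p.2.

Lemma distxx x : d x x = 0. Proof. by case: hd => /(_ x x) [_ ->]. Qed.
Lemma distC x y : d x y = d y x. Proof. by case: hd => _ []. Qed.
Lemma dist_triangle x y z : d x z <= d x y + d y z. Proof. by case: hd => _ [] _. Qed.
Lemma dist_ge0 x y : 0 <= d x y.
Proof. by have := dist_triangle x y x; rewrite distxx (distC y x); lra. Qed.

Lemma asymp_isometric_to_normP N : asymp_isometric_to_norm d N <->
  asymp_equiv dist_pair (fun p => N (p.1 - p.2)).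
Proof.
rewrite asymp_equivP; split=> H c c1; have [C [C0 HC]] := H c c1; exists C.
  by split=> // -[x y]; exact: HC.
by split=> // x y; exact: (HC (x, y)).
Qed.

Section NormToConditions.
Variables (N : E -> R) (hN : is_norm absK N).

Lemma normZ a x : N (a *: x) = absK a * N x. Proof. by case: hN => _ []. Qed.
Lemma normD x y : N (x + y) <= N x + N y. Proof. by case: hN => _ []. Qed.
Lemma norm0 : N 0 = 0. Proof. by rewrite -(scale0r 0) normZ absK0 mul0r. Qed.
Lemma normN x : N (- x) = N x. Proof. by rewrite -scaleN1r normZ absKN1 mul1r. Qed.

Lemma norm_ge0 x : 0 <= N x.
Proof. by have := normD x (- x); rewrite subrr norm0 normN; lra. Qed.

Lemma norm_sum n (f : 'I_n -> E) : N (\sum_(i < n) f i) <= \sum_(i < n) N (f i).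
Proof.
by apply: (big_ind2 (fun x y => N x <= y)); rewrite ?norm0 // => *;
  apply: le_trans (normD _ _) _; exact: lerD.
Qed.

Hypothesis dist_le_norm : asymp_le dist_pair (fun p => N (p.1 - p.2)).
Hypothesis norm_le_dist : asymp_le (fun p => N (p.1 - p.2)) dist_pair.

Lemma asymp_multiplicative_of_norm : asymp_multiplicative absK d.
Proof.
move=> _ /exists_sqrt_gt1[c c1 <-]; have c0 : 0 < c by lra.
have [C C0 dN] := dist_le_norm c1; have [C' C'0 Nd] := norm_le_dist c1.
have C2_0 : 0 <= c * C' + C by rewrite addr_ge0 // mulr_ge0 //; lra.
exists (c * C' + C), (c * C' + C); do 2!split => //.
move=> l x y; set A := absK l; have A0 : 0 <= A := absK_ge0 l.
have normlxy : N (l *: x - l *: y) = A * N (x - y) by rewrite -scalerBr normZ.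
have := dN (l *: x, l *: y); have := Nd (l *: x, l *: y); rewrite /dist_pair /= normlxy.
have := dN (x, y); have := Nd (x, y); rewrite /dist_pair /=.
move: (d x y) (d (l *: x) (l *: y)) (N (x - y)) (dist_ge0 x y) => D Dl M D0.
move=> MD DM MDl DlM.
have cA0 : 0 <= c * A by rewrite mulr_ge0 //; lra.
split.
  have key : A * D <= c * c * Dl + (c * C' + C * A).
    have := ler_wpM2l A0 DM; have := ler_wpM2l (ltW c0) MDl; nra.
  have cc0 : 0 < c * c by rewrite mulr_gt0.
  have cci1 : (c * c)^-1 <= 1 by rewrite invf_le1 //; nra.
  have := ler_divl_addr cc0 key; rewrite mulrA.
  have : (c * c)^-1 * (c * C' + C * A) <= c * C' + C * A.
    by rewrite ler_piMl // addr_ge0 // mulr_ge0 //; lra.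
  nra.
have := ler_wpM2l cA0 MD; nra.
Qed.

Lemma unbounded_on_subspaces_of_norm : unbounded_on_subspaces d.
Proof.
move=> V [V0 VS] [v [Vv v0]] M.
have Nv : 0 < N v.
  rewrite lt_def norm_ge0 // andbT; apply/eqP => /(proj1 hN); exact: v0.
have [C C0 Nd] := norm_le_dist (ltr1n R 2).
pose n := Num.truncn ((2 * M + C) / N v); exists (n.+1%:R *: v), 0.
split; first by have := VS n.+1%:R v 0 Vv V0; rewrite addr0.
split => //; have := Nd (n.+1%:R *: v, 0); rewrite /dist_pair /= subr0 normZ absK_nat.
have := truncnS_gt ((2 * M + C) / N v); rewrite ltr_pdivrMr // -/n.
move: (n.+1%:R * N v) (d (n.+1%:R *: v) 0) => nNv D; lra.
Qed.

Lemma sum_condition_of_norm : sum_condition d.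
Proof.
move=> _ /exists_sqrt_gt1[c c1 <-]; have c0 : 0 < c by lra.
have [C C0 dN] := dist_le_norm c1; have [C' C'0 Nd] := norm_le_dist c1.
exists (c * C' + C); split => [|n n2 x y]; first by rewrite addr_ge0 // mulr_ge0 //; lra.
have := dN (\sum_(i < n) x i, \sum_(i < n) y i); rewrite /dist_pair /= -sumrB.
have sumN : \sum_(i < n) N (x i - y i) <= \sum_(i < n) (c * d (x i) (y i) + C').
  by apply: ler_sum => i _; exact: (Nd (x i, y i)).
rewrite big_split /= -mulr_sumr sumr_const card_ord -mulr_natr in sumN.
have := norm_sum (fun i => x i - y i).
have n1 : 1 <= n%:R :> R by rewrite ler1n; exact: leq_trans n2.
move: (\sum_(i < n) d (x i) (y i)) (N _) (\sum_(i < n) N _) (n%:R : R) sumN n1 => S NS SN m.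
move=> sumN n1 NSSN dSN.
have := ler_wpM2l (ltW c0) (le_trans NSSN sumN); have : C <= m * C by nra.
lra.
Qed.

Section Haar.
Variable mu : probability (Kmeas absK) R.
Hypothesis muU : mu U = 1%E.

Lemma integral_dist_scaled_bounds c : 1 < c -> exists2 C : R, 0 <= C &
  forall (n : nat) x,
    ((c^-1 * (n%:R * N x) - C)%:E
       <= \int[mu]_(u in U) (d ((n%:R * u) *: x) 0)%:E
       <= (c * (n%:R * N x) + C)%:E)%E.
Proof.
move=> c1; have c0 : 0 < c by lra.
have [C C0 dN] := dist_le_norm c1; have [C' C'0 Nd] := norm_le_dist c1.
exists (C + C') => [|n x]; first exact: addr_ge0.
apply: ge0_integral_between => //; first exact: measurable_Uset.
  by move=> u _; exact: dist_ge0.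
move=> u Uu; have Nnux : N ((n%:R * u) *: x - 0) = n%:R * N x.
  by rewrite subr0 normZ absK_natM Uu mulr1.
have := dN ((n%:R * u) *: x, 0); have := Nd ((n%:R * u) *: x, 0).
rewrite /dist_pair /= Nnux => /(ler_divl_addr c0) lo hi.
have : c^-1 * C' <= C' by rewrite ler_piMl // invf_le1; lra.
by move: (d _ _) (c^-1 * _) lo hi => D cnN lo hi cC'; apply/andP; split; lra.
Qed.

Lemma haar_limit_of_norm : haar_limit d mu N.
Proof.
move=> x; have Nx0 := norm_ge0 x.
have I_fin n :
  (\int[mu]_(u in U) (d ((n%:R * u) *: x) 0)%:E)%E \is a fin_num.
  have [C _ /(_ n x) /andP[lo hi]] := integral_dist_scaled_bounds (ltr1n R 2).
  by rewrite fin_numElt (lt_le_trans (ltNyr _) lo) (le_lt_trans hi (ltry _)).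
apply: cvg_EFin; first by apply: nearW => n; rewrite fin_numM.
rewrite -(cvg_shiftS _ (nbhs (N x : R^o))); apply: cvg_asymp_squeeze Nx0 _ => c c1.
have [C C0 hI] := integral_dist_scaled_bounds c1; exists C => // n /=.
have := hI n.+1 x; rewrite -(fineK (I_fin n.+1)) !lee_fin -EFinM /=.
move: (fine _) => J; move: (n.+1%:R : R) (ltr0Sn R n) => m m0 /andP[lo hi].
have mi0 : 0 <= m^-1 by rewrite invr_ge0 ltW.
have m0' : m != 0 by rewrite gt_eqF.
have c0 : c != 0 by rewrite gt_eqF // (lt_trans ltr01 c1).
split.
  have -> : c^-1 * N x - C / m = m^-1 * (c^-1 * (m * N x) - C).
    by field; rewrite c0 m0'.
  by rewrite ler_wpM2l.
have -> : c * N x + C / m = m^-1 * (c * (m * N x) + C) by field.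
by rewrite ler_wpM2l.
Qed.

End Haar.

End NormToConditions.

Section ConditionsToNorm.
Hypothesis ham : asymp_multiplicative absK d.
Hypothesis hub : unbounded_on_subspaces d.
Hypothesis hsc : sum_condition d.

Lemma dist_add_le c : 1 < c -> exists2 C : R, 0 <= C &
  forall a b a' b', d (a + b) (a' + b') <= c * (d a a' + d b b') + C.
Proof.
move=> c1; have [C0 [C00 H]] := hsc c1; exists (2 * C0) => [|a b a' b'].
  by rewrite mulr_ge0.
have := H 2%N (leqnn 2) (fun i => if val i == 0%N then a else b)
  (fun i => if val i == 0%N then a' else b').
by rewrite !big_ord_recl !big_ord0 /= !addr0.
Qed.

Lemma dist_translate_equiv : asymp_equiv dist_pair (fun p => d (p.1 - p.2) 0).
Proof.
split=> c c1; have [C C0 H] := dist_add_le c1; exists C => // -[x y] /=.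
  by have := H (x - y) y 0 y; rewrite subrK add0r distxx addr0.
by have := H x (- y) y (- y); rewrite subrr distxx addr0.
Qed.

Definition growth x (n : nat) := d (n.+1%:R *: x) 0 / n.+1%:R.

Lemma growth_ge0 x n : 0 <= growth x n.
Proof. by rewrite divr_ge0 // dist_ge0. Qed.

Lemma growth_equiv :
  asymp_equiv (fun p : E * nat => growth p.1 p.2) (fun p => d p.1 0).
Proof.
apply/asymp_equivP => c c1; have [C2 [C3 [C20 [C30 H]]]] := ham c1.
exists (C2 + C3); split => [|[x n]]; first exact: addr_ge0.
have [lo hi] := H n.+1%:R x 0; rewrite scaler0 absK_nat in lo hi.
rewrite /growth /=; have m1 : 1 <= n.+1%:R :> R by rewrite ler1n.
move: (n.+1%:R : R) (d (n.+1%:R *: x) 0) (d x 0) m1 lo hi => m Dm D m1 lo hi.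
have m0 : 0 < m by lra.
have C3m : C3 <= C3 * m by rewrite ler_peMr.
by rewrite ler_pdivlMr // ler_pdivrMr //; split; nra.
Qed.

Lemma bounded_growth x : bounded_fun (growth x).
Proof.
have [/(_ 2 (ltr1n R 2)) [C _ H] _] := growth_equiv.
by apply: (@bounded_fun_nonneg _ _ (2 * d x 0 + C)) => n; rewrite growth_ge0 (H (x, n)).
Qed.

Lemma growth_scale a c : 1 < c -> exists2 k : R, 0 <= k & forall x n,
  c^-1 * absK a * growth x n - k / n.+1%:R <= growth (a *: x) n /\
  growth (a *: x) n <= c * absK a * growth x n + k / n.+1%:R.
Proof.
move=> c1; have [C2 [C3 [C20 [C30 H]]]] := ham c1.
exists (C2 * absK a + C3) => [|x n]; first by rewrite addr_ge0 // mulr_ge0.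
have [lo hi] := H a (n.+1%:R *: x) 0.
rewrite scaler0 scalerA commr_nat -scalerA in lo hi.
have mi : 0 <= n.+1%:R^-1 :> R by rewrite invr_ge0.
rewrite /growth !mulrA -mulrBl -mulrDl.
by split; apply: ler_wpM2r => //; lra.
Qed.

Lemma growth_add c : 1 < c -> exists2 k : R, 0 <= k & forall x y n,
  growth (x + y) n <= c * (growth x n + growth y n) + k / n.+1%:R.
Proof.
move=> c1; have [C C0 H] := dist_add_le c1; exists C => // x y n.
have := H (n.+1%:R *: x) (n.+1%:R *: y) 0 0; rewrite -scalerDr addr0 => h.
have mi : 0 <= n.+1%:R^-1 :> R by rewrite invr_ge0.
rewrite /growth -mulrDl mulrA -mulrDl; exact: ler_wpM2r.
Qed.

Definition asymp_norm x := limn_sup (growth x).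

Lemma asymp_norm_ge0 x : 0 <= asymp_norm x.
Proof.
by apply: limn_sup_ge_frequently (bounded_growth x) _ => m; exists m => //; exact: growth_ge0.
Qed.

Lemma dist0_asymp_norm_equiv : asymp_equiv (fun x => d x 0) asymp_norm.
Proof.
have [gd dg] := growth_equiv; split => c c1.
  have [C C0 H] := dg c c1; exists C => // x.
  rewrite -lerBlDr -ler_pdivrMl; last by lra.
  apply: limn_sup_ge_frequently (bounded_growth x) _ => m; exists m => //.
  by rewrite ler_pdivrMl ?lerBlDr ?(H (x, m)) //; lra.
have [C C0 H] := gd c c1; exists C => // x.
by apply: limn_sup_le_near (bounded_growth x) _; apply: nearW => n; exact: (H (x, n)).
Qed.

Lemma asymp_normZ a x : asymp_norm (a *: x) = absK a * asymp_norm x.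
Proof.
have A0 := absK_ge0 a; have N0 := asymp_norm_ge0 x.
apply/eqP; rewrite eq_le; apply/andP; split.
  apply: ler_forall_gt1_mulr => [|c c1]; first exact: mulr_ge0.
  have [k k0 H] := growth_scale a c1; rewrite mulrA.
  apply: limn_sup_le_scale (cvg_div_succ k) _ => //; try exact: bounded_growth.
    by rewrite mulr_ge0 //; lra.
  by move=> n; case: (H x n).
apply: ler_forall_gt1_mulr => [|c c1]; first exact: asymp_norm_ge0.
have [k k0 H] := growth_scale a c1.
rewrite -ler_pdivrMl; last by lra.
rewrite mulrA; apply: limn_sup_ge_scale (cvg_div_succ k) _ => //; try exact: bounded_growth.
  by rewrite mulr_ge0 // invr_ge0; lra.
by move=> n; case: (H x n).
Qed.

Lemma asymp_normD x y : asymp_norm (x + y) <= asymp_norm x + asymp_norm y.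
Proof.
apply: ler_forall_gt1_mulr => [|c c1]; first by rewrite addr_ge0 // asymp_norm_ge0.
have [k k0 H] := growth_add c1.
have [bx by_] := (bounded_growth x, bounded_growth y).
have bxy := bounded_funD bx by_.
apply: le_trans (ler_wpM2l _ (le_limn_supD bx by_)); last by lra.
by apply: limn_sup_le_scale (cvg_div_succ k) (H x y) => //; [exact: bounded_growth | lra].
Qed.

Lemma asymp_norm_eq0 x : asymp_norm x = 0 -> x = 0.
Proof.
move=> Nx0; have [//|/eqP x0] := eqVneq x 0; exfalso.
have [/(_ 2 (ltr1n R 2)) [C C0 H] _] := dist0_asymp_norm_equiv.
have V_bounded a : d (a *: x) 0 <= C.
  by have /= := H (a *: x); rewrite asymp_normZ Nx0 !mulr0 add0r.
have Kx_subspace : is_subspace (range ( *:%R ^~ x)).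
  split; first by exists 0; rewrite ?scale0r.
  by move=> a _ _ [b _ <-] [b' _ <-]; exists (a * b + b') => //; rewrite scalerDl scalerA.
have Kx_nontrivial : exists v, range ( *:%R ^~ x) v /\ v <> 0.
  by exists x; split => //; exists 1; rewrite ?scale1r.
have [_ [_ [[a _ <-] [[b _ <-] dab]]]] := hub Kx_subspace Kx_nontrivial (2 * C).
have := dist_triangle (a *: x) 0 (b *: x); rewrite (distC 0).
have := V_bounded a; have := V_bounded b; lra.
Qed.

Lemma asymp_norm_is_norm : is_norm absK asymp_norm.
Proof. by split; [exact: asymp_norm_eq0 | split; [exact: asymp_normZ | exact: asymp_normD]]. Qed.

Lemma asymp_norm_isometric :
  asymp_equiv dist_pair (fun p => asymp_norm (p.1 - p.2)).
Proof.
apply: asymp_equiv_trans dist_translate_equiv _.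
exact: (asymp_equiv_comp (fun p : E * E => p.1 - p.2) dist0_asymp_norm_equiv).
Qed.

End ConditionsToNorm.

End MetricVectorSpace.

Theorem theorem3_for_abs : theorem3_for absK.
Proof.
move=> E d [hd _]; split.
  split=> [[N [hN /asymp_isometric_to_normP [dN Nd]]] | [ham hub hsc]].
    split; [exact (asymp_multiplicative_of_norm hd hN dN Nd)
           | exact: unbounded_on_subspaces_of_norm hN Nd
           | exact: sum_condition_of_norm hN dN Nd].
  exists (asymp_norm d); split; first exact: asymp_norm_is_norm.
  exact/asymp_isometric_to_normP/asymp_norm_isometric.
move=> ham hub hsc mu [muU _].
have [dN Nd] := asymp_norm_isometric hd ham hsc.
exists (asymp_norm d); split; first exact: asymp_norm_is_norm.
  exact/asymp_isometric_to_normP.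
exact (haar_limit_of_norm hd (asymp_norm_is_norm hd ham hub hsc) dN Nd muU).
Qed.

End AbsoluteValue.

Section ScalarFields.
Variable R : realType.

Lemma cabsM (a b : R[i]) : cabs (a * b) = cabs a * cabs b.
Proof. exact: Normc.normcM. Qed.

Lemma cabs_nat (n : nat) : cabs (n%:R : R[i]) = n%:R.
Proof. by rewrite -[cabs _]/(Normc.normc _) normcMn Normc.normc1. Qed.

Lemma quat_nat (n : nat) : (n%:R : quat R) = Quat n%:R 0 0 0.
Proof.
elim: n => [|n IH] //; rewrite -addn1 natrD IH /GRing.add /= /qadd /=.
by rewrite natrD !addr0.
Qed.

Lemma qabsM (x y : quat R) : qabs (x * y) = qabs x * qabs y.
Proof.
case: x => a b c e; case: y => a' b' c' e'.
rewrite /qabs -sqrtrM; last by rewrite /= !addr_ge0 ?sqr_ge0.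
by congr Num.sqrt; rewrite [Quat a b c e * _]/GRing.mul /=; ring.
Qed.

Lemma qabs_nat (n : nat) : qabs (n%:R : quat R) = n%:R.
Proof.
by rewrite quat_nat /qabs /= expr0n /= !addr0 sqrtr_sqr ger0_norm.
Qed.

End ScalarFields.

Theorem theorem3 (R : realType) :
  [/\ @theorem3_for R R (fun x : R => `|x|),
      @theorem3_for R R[i] (@cabs R) &
      @theorem3_for R (quat R) (@qabs R)].
Proof.
split; apply: theorem3_for_abs.
- exact: normr_ge0.
- exact: normrM.
- exact: normr_nat.
- by case=> a b; exact: sqrtr_ge0.
- exact: cabsM.
- exact: cabs_nat.
- by move=> x; exact: sqrtr_ge0.
- exact: qabsM.
- exact: qabs_nat.
Qed.
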